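(* For all graphs $G$ and $H$, \[\bar{\vartheta}(G \times H) = \min\{\bar{\vartheta}(G), \bar{\vartheta}(H)\}.\]
   Context: Graphs are finite, simple and undirected. The categorical product $G\times H$ has vertex set $V(G)\times V(H)$, with $(u_1,v_1)\sim(u_2,v_2)$ iff $u_1\sim u_2$ and $v_1\sim v_2$. For a real $k>1$, a strict vector $k$-coloring of a graph $G$ is a map $\varphi$ from $V(G)$ to the unit sphere of some $\mathbb{R}^{d}$ such that $\varphi(u)^T\varphi(v) = -\frac{1}{k-1}$ whenever $u\sim v$. The strict vector chromatic number $\bar{\vartheta}(G)$ is the infimum of real $k>1$ such that $G$ admits a strict vector $k$-coloring; equivalently, $\bar{\vartheta}(G)=\vartheta(\overline{G})$, the Lovász theta function of the complement of $G$. *)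

From HB Require Import structures.
From mathcomp Require Import all_boot all_order all_algebra.
From mathcomp Require Import boolp classical_sets reals.
Set Implicit Arguments. Unset Strict Implicit. Unset Printing Implicit Defensive.
Import Order.TTheory GRing.Theory Num.Theory.
Local Open Scope ring_scope.
Local Open Scope classical_set_scope.

Definition simple_graph (T : finType) (e : rel T) : Prop :=
  symmetric e /\ irreflexive e.

Definition cat_prod (T1 T2 : finType) (e1 : rel T1) (e2 : rel T2)
  : rel (T1 * T2)%type :=
  fun x y => e1 x.1 y.1 && e2 x.2 y.2.

Definition dotv (R : realType) (d : nat) (u v : 'rV[R]_d) : R :=
  (u *m v^T) 0 0.

Definition strict_vector_coloring (R : realType) (T : finType) (e : rel T)
  (k : R) (d : nat) (phi : T -> 'rV[R]_d) : Prop :=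
  (forall u, dotv (phi u) (phi u) = 1) /\
  (forall u v, e u v -> dotv (phi u) (phi v) = - (k - 1)^-1).

Definition svchi (R : realType) (T : finType) (e : rel T) : R :=
  inf [set k : R | 1 < k /\
         exists (d : nat) (phi : T -> 'rV[R]_d), strict_vector_coloring e k phi].

From mathcomp Require Import all_boot all_order all_algebra.
From mathcomp Require Import ring lra.
From mathcomp Require Import boolp classical_sets reals topology normedtype derive.
Import numFieldNormedType.Exports.
Import Order.TTheory GRing.Theory Num.Theory.
Local Open Scope ring_scope.
Set Implicit Arguments. Unset Strict Implicit. Unset Printing Implicit Defensive.

(* If G has a strict vector k-coloring, composing it with the first projection colors
   G x H, so svchi (G x H) <= min (svchi G, svchi H).

   Conversely, let G x H have a strict vector k-coloring and suppose k < k' < svchi G,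
   svchi H. As G has no strict vector k'-coloring, the compact convex set of trace-one psd
   matrices, restricted to the diagonal and the edges, misses the line through the pattern
   [I - A / (k' - 1)]; the residual at a point of minimal distance is a separating
   hyperplane. Rescaling it gives a dual certificate: a symmetric P supported on the edges,
   with I + P psd and largest eigenvalue p >= k' - 1, nearly attained by a unit vector v.
   Take (Q, q, w) likewise for H. The matrix max(p, q) (I x I) + P x Q is a
   nonnegative combination of tensor products of the psd matrices p I - P, I + P,
   q I - Q, I + Q, so pairing it with the Gram matrix of the coloring rescaled by v x w gives
   0 <= max(p, q) - (v^T P v) (w^T Q w) / (k - 1), which fails because v^T P v and w^T Q w
   are close to p, q >= k' - 1 > k - 1. *)

Lemma ler_sum_term (R : realType) (I : finType) (F : I -> R) i0 :
  (forall i, 0 <= F i) -> F i0 <= \sum_i F i.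
Proof.
move=> F0; rewrite (bigD1 i0) //= -{1}[F i0]addr0 lerD2l.
by apply: sumr_ge0 => i _.
Qed.

Section DotProduct.
Variable R : realType.

Lemma dotvE d (u v : 'rV[R]_d) : dotv u v = \sum_k u 0 k * v 0 k.
Proof. by rewrite /dotv !mxE; apply: eq_bigr => k _; rewrite mxE. Qed.

Lemma dotvZ d (a b : R) (u v : 'rV[R]_d) : dotv (a *: u) (b *: v) = a * b * dotv u v.
Proof. by rewrite !dotvE big_distrr /=; apply: eq_bigr => k _; rewrite !mxE; ring. Qed.

Lemma dot0v d (v : 'rV[R]_d) : dotv 0 v = 0.
Proof. by rewrite dotvE big1 // => k _; rewrite mxE mul0r. Qed.

Lemma dotv_row_mx d1 d2 (a c : 'rV[R]_d1) (b f : 'rV[R]_d2) :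
  dotv (row_mx a b) (row_mx c f) = dotv a c + dotv b f.
Proof.
rewrite !dotvE big_split_ord /=.
by congr (_ + _); apply: eq_bigr => k _; rewrite ?row_mxEl ?row_mxEr.
Qed.

Lemma dotv_const (a b : R) : dotv (const_mx a : 'rV[R]_1) (const_mx b) = a * b.
Proof. by rewrite dotvE big_ord1 !mxE. Qed.

End DotProduct.

Section QuadraticForms.
Variables (R : realType) (T : finType).
Implicit Types (M : T -> T -> R) (x y : T -> R).

Definition bil M x y := \sum_u \sum_w x u * y w * M u w.
Definition qf M x := bil M x x.
Definition psd M := forall x, 0 <= qf M x.
Definition symm M := forall u w, M u w = M w u.
Definition sqnorm x := \sum_u x u ^+ 2.

Lemma sum_delta (w : T) (F : T -> R) : \sum_u (u == w)%:R * F u = F w.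
Proof.
rewrite (bigD1 w) //= eqxx mul1r big1 ?addr0 // => u /negbTE ->.
by rewrite mul0r.
Qed.

Lemma bilDl M x1 x2 y : bil M (fun u => x1 u + x2 u) y = bil M x1 y + bil M x2 y.
Proof.
rewrite /bil -big_split; apply: eq_bigr => u _; rewrite -big_split.
by apply: eq_bigr => w _ /=; ring.
Qed.

Lemma bilZl M a x y : bil M (fun u => a * x u) y = a * bil M x y.
Proof.
rewrite /bil mulr_sumr; apply: eq_bigr => u _; rewrite mulr_sumr.
by apply: eq_bigr => w _ /=; ring.
Qed.

Lemma bilZr M a x y : bil M x (fun u => a * y u) = a * bil M x y.
Proof.
rewrite /bil mulr_sumr; apply: eq_bigr => u _; rewrite mulr_sumr.
by apply: eq_bigr => w _ /=; ring.
Qed.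

Lemma bilC M x y : symm M -> bil M x y = bil M y x.
Proof.
move=> sM; rewrite /bil exchange_big /=; apply: eq_bigr => u _.
by apply: eq_bigr => w _; rewrite sM; ring.
Qed.

Lemma bil_delta M x (s : T) : bil M x (fun u => (u == s)%:R) = \sum_u x u * M u s.
Proof.
apply: eq_bigr => u _; rewrite -(sum_delta s (fun w => x u * M u w)) /=.
by apply: eq_bigr => w _; ring.
Qed.

Lemma qfD M x y : symm M ->
  qf M (fun u => x u + y u) = qf M x + 2 * bil M x y + qf M y.
Proof.
move=> sM; rewrite /qf bilDl !(bilC _ (fun u => x u + y u)) // !bilDl.
by rewrite (bilC x y sM); ring.
Qed.

Lemma qfZ M a x : qf M (fun u => a * x u) = a ^+ 2 * qf M x.
Proof. by rewrite /qf bilZl bilZr; ring. Qed.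

Lemma qf_delta M (s : T) : qf M (fun u => (u == s)%:R) = M s s.
Proof.
rewrite /qf bil_delta; under eq_bigr => u _ do rewrite mulrC.
by rewrite -[RHS](sum_delta s (M^~ s)); apply: eq_bigr => u _; rewrite mulrC.
Qed.

Lemma qf_add_delta M x (s : T) (t : R) : symm M ->
  qf M (fun u => x u + t * (u == s)%:R) =
  qf M x + 2 * t * (\sum_u x u * M u s) + t ^+ 2 * M s s.
Proof. by move=> sM; rewrite qfD // qfZ bilZr bil_delta qf_delta; ring. Qed.

Lemma qf_scale M a x : qf (fun u w => a * M u w) x = a * qf M x.
Proof.
rewrite /qf /bil big_distrr; apply: eq_bigr => u _.
by rewrite big_distrr; apply: eq_bigr => w _ /=; ring.
Qed.

Lemma psd_scale M a : 0 <= a -> psd M -> psd (fun u w => a * M u w).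
Proof. by move=> a0 pM x; rewrite qf_scale mulr_ge0. Qed.

Lemma symm_scale M a : symm M -> symm (fun u w => a * M u w).
Proof. by move=> sM u w; rewrite sM. Qed.

Lemma qf_id x : qf (fun u w => (u == w)%:R) x = sqnorm x.
Proof.
apply: eq_bigr => u _; rewrite expr2 -(sum_delta u (fun w => x w * x u)) /=.
by apply: eq_bigr => w _; rewrite (eq_sym u w); case: (w =P u) => [->|_]; ring.
Qed.

Lemma qf_sub_rank1 M x (r : T -> R) :
  qf (fun u w => M u w - r u * r w) x = qf M x - (\sum_u x u * r u) ^+ 2.
Proof.
rewrite /qf /bil expr2 big_distrl /= -sumrB; apply: eq_bigr => u _.
by rewrite big_distrr /= -sumrB; apply: eq_bigr => w _; ring.
Qed.

Lemma psd_diag_ge0 M (s : T) : psd M -> 0 <= M s s.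
Proof. by move=> pM; rewrite -qf_delta. Qed.

Lemma psd_diag_eq0 M (s w : T) : symm M -> psd M -> M s s = 0 -> M s w = 0.
Proof.
move=> sM pM Ms0; apply/eqP; apply/negPn/negP => Mne0.
have Mne0' : M w s != 0 by rewrite sM.
pose t := - (M w w + 1) / (2 * M w s).
have := pM (fun u => (u == w)%:R + t * (u == s)%:R).
rewrite qf_add_delta // qf_delta Ms0 mulr0 addr0 sum_delta.
have -> : 2 * t * M w s = - (M w w + 1) by rewrite /t; field.
lra.
Qed.

Lemma sqnorm_ge0 x : 0 <= sqnorm x.
Proof. by apply: sumr_ge0 => u _; exact: sqr_ge0. Qed.

Lemma sqnorm_eq0 x : sqnorm x = 0 -> forall u, x u = 0.
Proof.
move=> /eqP; rewrite psumr_eq0 => [/allP x0 u|u _]; last exact: sqr_ge0.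
by have := x0 u (mem_index_enum u); rewrite /= sqrf_eq0 => /eqP.
Qed.

Lemma sqnorm_delta (s : T) : sqnorm (fun u => (u == s)%:R) = 1.
Proof. by rewrite -qf_id qf_delta eqxx. Qed.

Lemma psd_of_unit M : (forall y, sqnorm y = 1 -> 0 <= qf M y) -> psd M.
Proof.
move=> M1 x; have [x0|x_neq0] := eqVneq (sqnorm x) 0.
  by rewrite /qf /bil big1 // => u _; rewrite big1 // => w _; rewrite sqnorm_eq0 // !mul0r.
have x_gt0 : 0 < sqnorm x by rewrite lt_def x_neq0 sqnorm_ge0.
pose s := Num.sqrt (sqnorm x).
have s_gt0 : 0 < s by rewrite sqrtr_gt0.
have -> : x = (fun u => s * (x u / s)) by apply/funext => u; rewrite mulrC divfK ?gt_eqF.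
rewrite qfZ; apply: mulr_ge0; first exact: sqr_ge0.
apply: M1; rewrite /sqnorm; under eq_bigr do rewrite expr_div_n.
by rewrite -mulr_suml sqr_sqrtr ?ltW // divff.
Qed.

Lemma qf_id_sub M L x :
  qf (fun u w => L * (u == w)%:R - M u w) x = L * sqnorm x - qf M x.
Proof.
rewrite -qf_id /qf /bil mulr_sumr -sumrB; apply: eq_bigr => u _.
by rewrite mulr_sumr -sumrB; apply: eq_bigr => w _; ring.
Qed.

Lemma bil_suml (I : finType) M (F : I -> T -> R) y :
  bil M (fun u => \sum_i F i u) y = \sum_i bil M (F i) y.
Proof.
rewrite /bil; under eq_bigr => u _ do under eq_bigr => w _ do rewrite !big_distrl.
by under eq_bigr => u _ do rewrite exchange_big; rewrite exchange_big.
Qed.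

Lemma bil_sumr (I : finType) M x (F : I -> T -> R) :
  bil M x (fun u => \sum_i F i u) = \sum_i bil M x (F i).
Proof.
rewrite /bil; under eq_bigr => u _ do under eq_bigr => w _ do rewrite big_distrr /= big_distrl.
by under eq_bigr => u _ do rewrite exchange_big; rewrite exchange_big.
Qed.

Lemma qf_sum (I : finType) M (F : I -> T -> R) :
  qf M (fun u => \sum_i F i u) = \sum_i \sum_i' bil M (F i) (F i').
Proof. by rewrite /qf bil_suml; apply: eq_bigr => i _; rewrite bil_sumr. Qed.

End QuadraticForms.

Section LargestEigenvalue.
Variables (R : realType) (T : finType).
Implicit Types (M : T -> T -> R) (x : T -> R).

Definition qf_range M := [set r : R | exists2 x, sqnorm x = 1 & r = qf M x]%classic.
Definition qf_max M := sup (qf_range M).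

Lemma qf_range_ub M : has_ubound (qf_range M).
Proof.
exists (\sum_u \sum_w `|M u w|) => r [x x1 ->].
have x_le1 u : `|x u| <= 1.
  have : x u ^+ 2 <= 1.
    by rewrite -x1; apply: (ler_sum_term (F := fun u => x u ^+ 2)) => w; exact: sqr_ge0.
  by have := real_normK (num_real (x u)); have := normr_ge0 (x u); nra.
apply: ler_sum => u _; apply: ler_sum => w _; apply: le_trans (ler_norm _) _.
rewrite !normrM -[leRHS]mul1r ler_wpM2r ?normr_ge0 //.
by apply: mulr_ile1; rewrite ?normr_ge0 ?x_le1.
Qed.

Lemma has_sup_qf_range M x : sqnorm x = 1 -> has_sup (qf_range M).
Proof. by move=> x1; split; [exists (qf M x), x | exact: qf_range_ub]. Qed.

Lemma qf_le_max M x : sqnorm x = 1 -> qf M x <= qf_max M.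
Proof. by move=> x1; apply: (sup_upper_bound (has_sup_qf_range M x1)); exists x. Qed.

Lemma qf_max_approx M (s : T) eps : 0 < eps ->
  exists2 x, sqnorm x = 1 & qf_max M - eps < qf M x.
Proof.
move=> eps0.
have [_ [x x1 ->] lt_x] := sup_adherent eps0 (has_sup_qf_range M (sqnorm_delta R s)).
by exists x.
Qed.

Lemma psd_max_sub M : psd (fun u w => qf_max M * (u == w)%:R - M u w).
Proof. by apply: psd_of_unit => y y1; rewrite qf_id_sub y1 mulr1 subr_ge0 qf_le_max. Qed.

End LargestEigenvalue.

Section FrobeniusProduct.
Variables (R : realType) (T : finType).
Implicit Types (X Y Z : T -> T -> R).

Definition frob X Y := \sum_u \sum_w X u w * Y u w.
Definition lincomb X (a : R) Y u w := X u w + a * Y u w.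

Lemma frobC X Y : frob X Y = frob Y X.
Proof. by apply: eq_bigr => u _; apply: eq_bigr => w _; rewrite mulrC. Qed.

Lemma frob_lincombl X a Y Z : frob (lincomb X a Y) Z = frob X Z + a * frob Y Z.
Proof.
rewrite /frob big_distrr -big_split /=; apply: eq_bigr => u _.
by rewrite big_distrr -big_split /=; apply: eq_bigr => w _; rewrite /lincomb; ring.
Qed.

Lemma frob_lincombr X a Y Z : frob Z (lincomb X a Y) = frob Z X + a * frob Z Y.
Proof. by rewrite frobC frob_lincombl !(frobC Z). Qed.

Lemma frob_lincomb_self X a Y :
  frob (lincomb X a Y) (lincomb X a Y) = frob X X + 2 * a * frob X Y + a ^+ 2 * frob Y Y.
Proof. by rewrite frob_lincombl !frob_lincombr (frobC Y X); ring. Qed.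

Lemma frob_self_ge0 X : 0 <= frob X X.
Proof. by do 2!apply: sumr_ge0 => ? _; rewrite -expr2 sqr_ge0. Qed.

Lemma frob_self_eq0 X : frob X X = 0 -> X = (fun _ _ => 0).
Proof.
move=> /eqP; rewrite psumr_eq0 => [/allP X0|u _]; last first.
  by apply: sumr_ge0 => w _; rewrite -expr2 sqr_ge0.
apply/funext => u; move/(_ u (mem_index_enum u)): X0; rewrite /= psumr_eq0 => [/allP X0|w _].
  by apply/funext => w; have := X0 w (mem_index_enum w); rewrite /= -expr2 sqrf_eq0 => /eqP.
by rewrite -expr2 sqr_ge0.
Qed.

Lemma frob_diag_le X u : X u u ^+ 2 <= frob X X.
Proof.
rewrite expr2; apply: le_trans (ler_sum_term u _) => [|v]; last first.
  by apply: sumr_ge0 => w _; rewrite -expr2 sqr_ge0.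
by apply: (ler_sum_term (F := fun w => X u w * X u w)) => w; rewrite -expr2 sqr_ge0.
Qed.

Lemma frob_rank1 X x : frob X (fun u w => x u * x w) = qf X x.
Proof. by apply: eq_bigr => u _; apply: eq_bigr => w _; ring. Qed.

End FrobeniusProduct.

Section GramRepresentation.
Variables (R : realType) (T : finType).
Implicit Types (M : T -> T -> R) (x : T -> R).

(* Vanishes when [M s s = 0], since [0^-1 = 0]. *)
Definition pivot M (s u : T) := M s u / Num.sqrt (M s s).

Lemma psd_sub_pivot M s : symm M -> psd M ->
  psd (fun u w => M u w - pivot M s u * pivot M s w).
Proof.
move=> sM pM x; rewrite qf_sub_rank1.
have [a0|a_gt0] := eqVneq (M s s) 0.
  rewrite /pivot a0 sqrtr0 invr0; under eq_bigr do rewrite mulr0 mulr0.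
  by rewrite big1 // expr0n subr0.
have {}a_gt0 : 0 < M s s by rewrite lt_def a_gt0 psd_diag_ge0.
pose b := \sum_u x u * M u s.
have := pM (fun u => x u + (- b / M s s) * (u == s)%:R).
rewrite qf_add_delta // -/b.
have -> : \sum_u x u * pivot M s u = b / Num.sqrt (M s s).
  by rewrite /b mulr_suml; apply: eq_bigr => u _; rewrite /pivot sM mulrA.
have -> : (b / Num.sqrt (M s s)) ^+ 2 = b ^+ 2 / M s s.
  by rewrite expr_div_n sqr_sqrtr ?ltW.
have -> : qf M x + 2 * (- b / M s s) * b + (- b / M s s) ^+ 2 * M s s =
  qf M x - b ^+ 2 / M s s by field; rewrite gt_eqF.
by [].
Qed.

Lemma sub_pivot_row M s w : symm M -> psd M ->
  M s w - pivot M s s * pivot M s w = 0.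
Proof.
move=> sM pM; rewrite /pivot.
have [a0|a_gt0] := eqVneq (M s s) 0.
  by rewrite (@psd_diag_eq0 R T M s w sM pM a0) a0 !mul0r subrr.
have {}a_gt0 : 0 < M s s by rewrite lt_def a_gt0 psd_diag_ge0.
have sq : Num.sqrt (M s s) * Num.sqrt (M s s) = M s s by rewrite -expr2 sqr_sqrtr ?ltW.
have sq0 : Num.sqrt (M s s) != 0 by rewrite gt_eqF // sqrtr_gt0.
by rewrite -{1}sq mulfK //; field.
Qed.

Lemma psd_gram_on n (S : {set T}) M : #|S| = n -> symm M -> psd M ->
  (forall u w, u \notin S -> M u w = 0) ->
  exists phi : T -> 'rV[R]_n, forall u w, M u w = dotv (phi u) (phi w).
Proof.
elim: n S M => [|n IH] S M cardS sM pM M0.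
  exists (fun _ => 0) => u w; rewrite dot0v M0 //.
  by move/eqP: cardS; rewrite cards_eq0 => /eqP ->; rewrite inE.
have [s sS] : exists s, s \in S.
  by apply/set0Pn; rewrite -card_gt0 cardS.
pose M' u w := M u w - pivot M s u * pivot M s w.
have sM' : symm M' by move=> u w; rewrite /M' sM mulrC.
have cardS' : #|S :\ s| = n by move: cardS; rewrite (cardsD1 s S) sS add1n => -[].
have M'0 u w : u \notin S :\ s -> M' u w = 0.
  rewrite in_setD1 negb_and negbK => /orP[/eqP ->|uS]; first exact: sub_pivot_row.
  by rewrite /M' /pivot M0 // sM M0 // !mul0r subr0.
have [psi Hpsi] := IH _ M' cardS' sM' (psd_sub_pivot s sM pM) M'0.
exists (fun u => row_mx (const_mx (pivot M s u) : 'rV_1) (psi u)) => u w.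
have /= -> := dotv_row_mx (const_mx (pivot M s u) : 'rV_1) (const_mx (pivot M s w))
  (psi u) (psi w).
by rewrite dotv_const -Hpsi /M'; ring.
Qed.

Lemma psd_gram M : symm M -> psd M ->
  exists phi : T -> 'rV[R]_#|T|, forall u w, M u w = dotv (phi u) (phi w).
Proof.
by move=> sM pM; apply: (@psd_gram_on _ [set: T]); rewrite ?cardsT // => u w; rewrite inE.
Qed.

End GramRepresentation.

Lemma psd_diag_scale (R : realType) (T : finType) (M : T -> T -> R) (y : T -> R) :
  psd M -> psd (fun u w => M u w / (y u * y w)).
Proof.
move=> pM x; have -> : qf (fun u w => M u w / (y u * y w)) x = qf M (fun u => x u / y u).
  by apply: eq_bigr => u _; apply: eq_bigr => w _; rewrite invfM; ring.
exact: pM.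
Qed.

Lemma frob_psd_ge0 (R : realType) (T : finType) (S K : T -> T -> R) :
  symm S -> psd S -> psd K -> 0 <= frob S K.
Proof.
move=> sS pS pK; have [sig Ssig] := psd_gram sS pS.
have -> : frob S K = \sum_i qf K (fun u => sig u 0 i).
  rewrite /frob; under eq_bigr do under eq_bigr do rewrite Ssig dotvE big_distrl.
  under eq_bigr do rewrite exchange_big; rewrite exchange_big.
  by apply: eq_bigr => i _; apply: eq_bigr => u _; apply: eq_bigr.
by apply: sumr_ge0 => i _; exact: pK.
Qed.

Lemma psd_dotv_form (R : realType) (T1 T2 : finType) d (Q : T2 -> T2 -> R)
    (Y : T1 -> T2 -> 'rV[R]_d) : psd Q ->
  psd (fun g g' => \sum_h \sum_h' Q h h' * dotv (Y g h) (Y g' h')).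
Proof.
move=> pQ x.
have -> : qf (fun g g' => \sum_h \sum_h' Q h h' * dotv (Y g h) (Y g' h')) x =
    \sum_j qf Q (fun h => \sum_g x g * Y g h 0 j).
  under [RHS]eq_bigr do rewrite qf_sum.
  rewrite [RHS]exchange_big; apply: eq_bigr => g _.
  rewrite [RHS]exchange_big; apply: eq_bigr => g' _.
  rewrite /bil big_distrr [RHS]exchange_big; apply: eq_bigr => h _.
  rewrite big_distrr [RHS]exchange_big; apply: eq_bigr => h' _.
  by rewrite dotvE !big_distrr; apply: eq_bigr => j _ /=; ring.
by apply: sumr_ge0 => j _; exact: pQ.
Qed.

Lemma first_order_nonneg (R : realType) (F D : R) : 0 <= D ->
  (forall t, 0 < t -> t <= 1 -> 0 <= 2 * t * F + t ^+ 2 * D) -> 0 <= F.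
Proof.
move=> D0 Ht; rewrite leNgt; apply/negP => F_lt0.
pose t := - F / (D - F).
have DF : 0 < D - F by lra.
have t0 : 0 < t by rewrite divr_gt0 // oppr_gt0.
have t1 : t <= 1 by rewrite ler_pdivrMr // mul1r; lra.
have tD : t * D <= - F by rewrite /t mulrAC ler_pdivrMr //; nra.
have := Ht t t0 t1; nra.
Qed.

Lemma bounded_set_rV (R : realType) n (A : set 'rV[R]_n) :
  (forall v k, A v -> `|v 0 k| <= 1) -> bounded_set A.
Proof.
move=> A1; exists 1; split; first exact: num_real.
move=> M M1 v Av /=; rewrite -[`|v|]/(mx_norm v) mx_normrE.
apply: (big_ind (fun y => y <= M)); first lra.
  by move=> a b aM bM; rewrite ge_max aM bM.
by move=> [i k] _ /=; rewrite (ord1 i); apply: le_trans (A1 _ _ Av) _; lra.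
Qed.

Section GramVectors.
Variables (R : realType) (T : finType).
Local Notation V := 'rV[R]_(#|T| * #|T|).

(* A point of [V] encodes one vector of [R^#|T|] per vertex, so the trace-one psd matrices
   are the image of the compact set [trace1] under the continuous map [gramv]. *)
Definition vecof (v : V) (u : T) (j : 'I_#|T|) := v 0 (mxvec_index (enum_rank u) j).
Definition gramv (v : V) (u w : T) := \sum_j vecof v u j * vecof v w j.

Lemma gramv_surj (M : T -> T -> R) : symm M -> psd M -> exists v : V, gramv v = M.
Proof.
move=> sM pM; have [phi Hphi] := psd_gram sM pM.
exists (mxvec (\matrix_(i, j) phi (enum_val i) 0 j)).
apply/funext => u; apply/funext => w; rewrite Hphi dotvE /gramv.
by apply: eq_bigr => j _; rewrite /vecof !mxvecE !mxE !enum_rankK.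
Qed.

Lemma gramv_sym v : symm (gramv v).
Proof. by move=> u w; apply: eq_bigr => j _; rewrite mulrC. Qed.

Lemma gramv_psd v : psd (gramv v).
Proof.
move=> x; have -> : qf (gramv v) x = \sum_j (\sum_u x u * vecof v u j) ^+ 2.
  under [RHS]eq_bigr => j _ do rewrite expr2 big_distrl /=.
  rewrite [RHS]exchange_big /=; apply: eq_bigr => u _.
  under [RHS]eq_bigr => j _ do rewrite big_distrr /=.
  rewrite [RHS]exchange_big /=; apply: eq_bigr => w _.
  by rewrite /gramv big_distrr /=; apply: eq_bigr => j _; ring.
by apply: sumr_ge0 => j _; apply: sqr_ge0.
Qed.

Lemma continuous_sum (I : finType) (F : I -> V -> R) :
  (forall i, continuous (F i)) -> continuous (fun v => \sum_i F i v).
Proof. by move=> cF; apply: continuous_big => //; exact: add_continuous. Qed.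

Lemma continuous_gramv u w : continuous (fun v => gramv v u w).
Proof.
apply: continuous_sum => j v.
by apply: continuousM; exact: coord_continuous.
Qed.

Definition trace1 : set V := [set v | \sum_u gramv v u u = 1].

Lemma compact_trace1 : compact trace1.
Proof.
apply: bounded_closed_compact; last first.
  have -> : trace1 = ((fun v => \sum_u gramv v u u) @^-1` [set 1])%classic by [].
  apply: preimage_closed; last exact: closed_eq.
  by move=> v _; apply: continuous_sum => u; exact: continuous_gramv.
apply: bounded_set_rV => v k tv; case/mxvec_indexP: k => i j.
have -> : v 0 (mxvec_index i j) = vecof v (enum_val i) j by rewrite /vecof enum_valK.
set a := vecof v (enum_val i) j.
have a2 : a ^+ 2 <= 1.
  rewrite -tv; apply: le_trans (ler_sum_term (enum_val i) _); last first.
    by move=> u; apply: sumr_ge0 => k _; rewrite -expr2 sqr_ge0.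
  rewrite expr2 /gramv.
  apply: (ler_sum_term (F := fun k => vecof v (enum_val i) k * vecof v (enum_val i) k)) => k.
  by rewrite -expr2 sqr_ge0.
have := real_normK (num_real a); have := normr_ge0 a; nra.
Qed.

Lemma trace1_gram (M : T -> T -> R) : symm M -> psd M -> \sum_u M u u = 1 ->
  exists2 v, trace1 v & gramv v = M.
Proof.
by move=> sM pM tM; have [v vM] := gramv_surj sM pM; exists v; rewrite // /trace1 /= vM.
Qed.

Lemma trace1_nonempty (u0 : T) : (trace1 !=set0)%classic.
Proof.
have T0 : 0 < #|T|%:R :> R by rewrite ltr0n; apply/card_gt0P; exists u0.
have [|||v tv _] := @trace1_gram (fun u w => #|T|%:R^-1 * (u == w)%:R).
- by move=> u w; rewrite eq_sym.
- move=> x; rewrite qf_scale qf_id; apply: mulr_ge0; last exact: sqnorm_ge0.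
  by rewrite invr_ge0 ltW.
- under eq_bigr do rewrite eqxx mulr1.
  by rewrite sumr_const -[_ *+ _]mulr_natr mulVf ?gt_eqF.
by exists v.
Qed.

Lemma trace1_segment v (x : T -> R) t : trace1 v -> sqnorm x = 1 -> 0 <= t <= 1 ->
  exists2 v', trace1 v' &
    gramv v' = lincomb (gramv v) t (lincomb (fun u w => x u * x w) (-1) (gramv v)).
Proof.
move=> tv x1 /andP[t0 t1]; apply: trace1_gram.
- by move=> u w; rewrite /lincomb gramv_sym [x u * _]mulrC.
- move=> y; have -> : qf (lincomb (gramv v) t (lincomb (fun u w => x u * x w) (-1) (gramv v))) y
      = (1 - t) * qf (gramv v) y + t * (\sum_u y u * x u) ^+ 2.
    rewrite /qf /bil expr2 big_distrl /= big_distrr big_distrr /= -big_split /=.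
    apply: eq_bigr => u _; rewrite big_distrr /= big_distrr big_distrr /= -big_split /=.
    by apply: eq_bigr => w _; rewrite /lincomb; ring.
  by apply: addr_ge0; apply: mulr_ge0; rewrite ?subr_ge0 ?sqr_ge0 ?gramv_psd.
- rewrite /lincomb big_split /= -big_distrr big_split /= -big_distrr /=.
  have -> : \sum_u x u * x u = 1 by rewrite -x1; apply: eq_bigr => u _; rewrite expr2.
  by move: tv; rewrite /trace1 /= => ->; ring.
Qed.

End GramVectors.

Section Separation.
Variables (R : realType) (T : finType) (e : rel T) (c : R).
Hypotheses (esym : symmetric e) (eirr : irreflexive e).
Local Notation V := 'rV[R]_(#|T| * #|T|).
Implicit Types (X Y Z : T -> T -> R).

Definition realizable := exists d (phi : T -> 'rV[R]_d),
  (forall u, dotv (phi u) (phi u) = 1) /\ (forall u w, e u w -> dotv (phi u) (phi w) = c).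

Definition supported X := forall u w, ~~ ((u == w) || e u w) -> X u w = 0.
Definition restrict X u w := if (u == w) || e u w then X u w else 0.
(* The Gram matrix of a realization of [c], restricted to the diagonal and the edges. *)
Definition pattern u w : R := if u == w then 1 else if e u w then c else 0.
Definition residual X :=
  lincomb (restrict X) (- (frob X pattern / frob pattern pattern)) pattern.

Lemma supported_pattern : supported pattern.
Proof. by move=> u w; rewrite negb_or /pattern => /andP[/negbTE -> /negbTE ->]. Qed.

Lemma supported_restrict X : supported (restrict X).
Proof. by move=> u w; rewrite /restrict => /negbTE ->. Qed.

Lemma supported_lincomb X a Y : supported X -> supported Y -> supported (lincomb X a Y).
Proof. by move=> sX sY u w uw; rewrite /lincomb sX // sY // mulr0 addr0. Qed.

Lemma frob_restrict X Z : supported Z -> frob (restrict X) Z = frob X Z.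
Proof.
move=> sZ; apply: eq_bigr => u _; apply: eq_bigr => w _; rewrite /restrict.
by case: ifP => // /negbT/sZ ->; rewrite !mulr0.
Qed.

Lemma supported_residual X : supported (residual X).
Proof. by apply: supported_lincomb; [exact: supported_restrict | exact: supported_pattern]. Qed.

Lemma frob_pattern_gt0 (u0 : T) : 0 < frob pattern pattern.
Proof. by apply: lt_le_trans (frob_diag_le _ u0); rewrite /pattern eqxx expr1n. Qed.

Section NonEmpty.
Variable u0 : T.

Lemma frob_residual_pattern X : frob (residual X) pattern = 0.
Proof.
have p0 := frob_pattern_gt0 u0; have sp := supported_pattern.
by rewrite frob_lincombl (frob_restrict _ sp); field; rewrite gt_eqF.
Qed.

Lemma residual_min X l :
  frob (residual X) (residual X) <=
  frob (lincomb (restrict X) (- l) pattern) (lincomb (restrict X) (- l) pattern).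
Proof.
have p0 := frob_pattern_gt0 u0; have sp := supported_pattern.
rewrite /residual !frob_lincomb_self (frob_restrict _ sp).
set b := frob X pattern; set d := frob pattern pattern; rewrite -subr_ge0.
have -> : frob (restrict X) (restrict X) + 2 * - l * b + (- l) ^+ 2 * d -
  (frob (restrict X) (restrict X) + 2 * - (b / d) * b + (- (b / d)) ^+ 2 * d) =
  (l * d - b) ^+ 2 / d by field; rewrite gt_eqF.
by rewrite divr_ge0 ?sqr_ge0 // ltW.
Qed.

End NonEmpty.

Lemma residual_eq0_realizable P : symm P -> psd P -> \sum_u P u u = 1 ->
  residual P = (fun _ _ => 0) -> realizable.
Proof.
move=> sP pP trP res0; have [phi Hphi] := psd_gram sP pP.
set l := frob P pattern / frob pattern pattern.
have Pl u w : (u == w) || e u w -> P u w = l * pattern u w.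
  move=> uw; have := congr1 (fun X => X u w) res0; rewrite /= /residual /lincomb /restrict uw.
  by move/eqP; rewrite addr_eq0 mulNr opprK => /eqP.
have Tl : #|T|%:R * l = 1.
  rewrite -[RHS]trP; under eq_bigr => u _ do rewrite Pl ?eqxx // /pattern eqxx mulr1.
  by rewrite sumr_const mulr_natl.
exists #|T|, (fun u => Num.sqrt (#|T|%:R) *: phi u).
have dE u w : dotv (Num.sqrt #|T|%:R *: phi u) (Num.sqrt #|T|%:R *: phi w) = #|T|%:R * P u w.
  by rewrite dotvZ -expr2 sqr_sqrtr ?ler0n // Hphi.
split=> [u|u w euw]; rewrite dE Pl ?eqxx ?euw ?orbT // mulrA Tl mul1r /pattern ?eqxx //.
by rewrite euw; case: eqP => // uw; move: euw; rewrite uw eirr.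
Qed.

Lemma continuous_frob (X Y : V -> T -> T -> R) :
  (forall u w, continuous (fun v => X v u w)) -> (forall u w, continuous (fun v => Y v u w)) ->
  continuous (fun v => frob (X v) (Y v)).
Proof.
move=> cX cY; apply: continuous_sum => u; apply: continuous_sum => w v.
exact: (continuousM (cX u w v) (cY u w v)).
Qed.

Lemma continuous_residual u w : continuous (fun v : V => residual (gramv v) u w).
Proof.
move=> v; rewrite /residual /lincomb.
apply: (@continuousD _ R^o _ (fun v => restrict (gramv v) u w)).
  rewrite /restrict; case: ((u == w) || e u w); first exact: continuous_gramv.
  exact: cst_continuous.
apply: continuousM; last exact: cst_continuous.
apply: continuousN; apply: continuousM; last exact: cst_continuous.
apply: continuous_frob => u' w'; first exact: continuous_gramv.
exact: cst_continuous.
Qed.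

Lemma residual_sym P : symm P -> symm (residual P).
Proof.
by move=> sP u w; rewrite /residual /lincomb /restrict /pattern !(eq_sym w) !(esym w) sP.
Qed.

Lemma residual_segment_le (u0 : T) P Q t (B := residual P)
    (D := restrict (lincomb Q (-1) P)) :
  frob (residual (lincomb P t (lincomb Q (-1) P)))
       (residual (lincomb P t (lincomb Q (-1) P))) <=
  frob B B + 2 * t * (frob B Q - frob B P) + t ^+ 2 * frob D D.
Proof.
set l := frob P pattern / frob pattern pattern.
apply: le_trans (residual_min u0 _ l) _.
have -> : lincomb (restrict (lincomb P t (lincomb Q (-1) P))) (- l) pattern =
    lincomb B t D.
  apply/funext => u; apply/funext => w.
  by rewrite /B /D /l /residual /lincomb /restrict; case: ifP => _; ring.
rewrite frob_lincomb_self (frobC B D) (frob_restrict _ (supported_residual P)).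
rewrite frob_lincombl !(frobC _ B).
lra.
Qed.

Theorem separation : ~ realizable ->
  exists B, [/\ symm B, supported B, 0 < frob B B, frob B pattern = 0 &
    forall x, sqnorm x = 1 -> frob B B <= qf B x].
Proof.
move=> nreal; have [u0 _|T0] := pickP (fun _ : T => true); last first.
  by case: nreal; exists 0%N, (fun _ => 0); split=> u; have := T0 u.
pose f v := frob (residual (gramv v)) (residual (gramv v)).
have cr : forall u w, continuous (fun v => residual (gramv v) u w) := continuous_residual.
have cf : continuous f := continuous_frob cr cr.
have [vs /set_mem tvs vs_min] :=
  EVT_min_rV (trace1_nonempty R u0) (@compact_trace1 R T) (continuous_subspaceT cf).
set P := gramv vs; set B := residual P.
have B_gt0 : 0 < frob B B.
  rewrite lt_def frob_self_ge0 andbT; apply/eqP => /frob_self_eq0 B0.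
  exact: nreal (residual_eq0_realizable (gramv_sym vs) (gramv_psd vs) tvs B0).
have BP : frob B P = frob B B.
  have -> : frob B P = frob B (restrict P).
    by rewrite !(frobC B) (frob_restrict _ (supported_residual P)).
  have -> : restrict P = lincomb B (frob P pattern / frob pattern pattern) pattern.
    by apply/funext => u; apply/funext => w; rewrite /B /residual /lincomb; ring.
  by rewrite frob_lincombr (frob_residual_pattern u0) mulr0 addr0.
exists B; split=> //.
- exact: residual_sym (gramv_sym vs).
- exact: supported_residual.
- exact: frob_residual_pattern.
- (* First-order optimality of [P] along the segment towards [x x^T]. *)
  move=> x x1; rewrite -frob_rank1 -subr_ge0.
  pose D := restrict (lincomb (fun u w => x u * x w) (-1) P).
  apply: (first_order_nonneg (frob_self_ge0 D)).
  move=> t t0 t1; have t01 : 0 <= t <= 1 by rewrite ltW.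
  have [v' tv' Pt] := trace1_segment tvs x1 t01.
  have := vs_min v' (mem_set tv'); rewrite /f Pt -/P.
  have /= := residual_segment_le u0 P (fun u w => x u * x w) t; rewrite -/B BP.
  lra.
Qed.

End Separation.

Section DualCertificate.
Variables (R : realType) (T : finType) (e : rel T).
Implicit Types (P B : T -> T -> R).

(* A feasible point of the semidefinite dual of [svchi]. *)
Definition dual_feasible P (p : R) :=
  [/\ symm P, forall u w, ~~ e u w -> P u w = 0,
      psd (fun u w => (u == w)%:R + P u w) & psd (fun u w => p * (u == w)%:R - P u w)].

Lemma trace_offdiag_pattern (c : R) B : supported e B -> frob B (pattern e c) = 0 ->
  \sum_u B u u + c * \sum_u \sum_w (u != w)%:R * B u w = 0.
Proof.
move=> sB BN; rewrite -[RHS]BN /frob big_distrr -big_split /=; apply: eq_bigr => u _.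
rewrite -(sum_delta u (B u)) big_distrr -big_split /=; apply: eq_bigr => w _.
rewrite /pattern (eq_sym w u); case: (u =P w) => [<-|uw] /=; first by ring.
case euw : (e u w); first by ring.
by rewrite sB ?negb_or ?euw ?andbT; [ring | apply/eqP].
Qed.

Lemma normalized_certificate (c : R) (u0 : T) B : c != 0 -> symm B -> supported e B ->
  psd B -> (forall u, 0 < B u u) -> frob B (pattern e c) = 0 ->
  exists P z, [/\ symm P, forall u w, ~~ e u w -> P u w = 0,
    psd (fun u w => (u == w)%:R + P u w), sqnorm z = 1 & qf P z = - c^-1].
Proof.
move=> c0 sB suppB pB B_gt0 BN.
pose y u := Num.sqrt (B u u).
have y_gt0 u : 0 < y u by rewrite sqrtr_gt0.
have yy u : y u * y u = B u u by rewrite -expr2 sqr_sqrtr ?ltW.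
pose P u w := if u == w then 0 else B u w / (y u * y w).
pose s := \sum_u B u u.
have s_gt0 : 0 < s.
  by rewrite /s (bigD1 u0) //= ltr_pwDl ?B_gt0 // sumr_ge0 // => u _; exact: ltW.
have ss : Num.sqrt s * Num.sqrt s = s by rewrite -expr2 sqr_sqrtr // ltW.
have ss0 : Num.sqrt s != 0 by rewrite gt_eqF // sqrtr_gt0.
exists P, (fun u => y u / Num.sqrt s); split.
- by move=> u w; rewrite /P (eq_sym u w) sB (mulrC (y u)).
- move=> u w neuw; rewrite /P; case: ifP => // uw.
  by rewrite suppB ?mul0r // negb_or uw neuw.
- have -> : (fun u w => (u == w)%:R + P u w) = (fun u w => B u w / (y u * y w)).
    apply/funext => u; apply/funext => w; rewrite /P; case: (u =P w) => [->|_] /=.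
      by rewrite yy divff ?gt_eqF //; ring.
    by ring.
  exact: psd_diag_scale.
- transitivity (\sum_u B u u / s); last by rewrite -mulr_suml divff // gt_eqF.
  by apply: eq_bigr => u _; rewrite expr_div_n !expr2 yy ss.
have offE := trace_offdiag_pattern suppB BN.
transitivity ((\sum_u \sum_w (u != w)%:R * B u w) / s).
  rewrite /qf /bil mulr_suml; apply: eq_bigr => u _; rewrite mulr_suml.
  apply: eq_bigr => w _; rewrite /P; case: (u =P w) => _ /=; first by ring.
  by rewrite -[in RHS]ss; field; rewrite ss0 !gt_eqF.
have -> : \sum_u \sum_w (u != w)%:R * B u w = - s / c.
  by apply: (mulfI c0); rewrite [RHS]mulrC divfK //; move: offE; rewrite -/s; lra.
by field; rewrite c0 gt_eqF.
Qed.

Lemma dual_certificate (k eps : R) : symmetric e -> irreflexive e -> 1 < k -> 0 < eps ->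
  ~ realizable e (- (k - 1)^-1) ->
  exists P p v, [/\ dual_feasible P p, k - 1 <= p, sqnorm v = 1 & p - eps <= qf P v].
Proof.
move=> esym eirr k1 eps0 nreal; have [u0 _|T0] := pickP (fun _ : T => true); last first.
  by case: nreal; exists 0%N, (fun _ => 0); split=> u; have := T0 u.
have [B [sB suppB B_gt0 BN Bunit]] := separation esym eirr nreal.
have pB : psd B.
  by apply: psd_of_unit => y y1; apply: le_trans (Bunit y y1); exact: frob_self_ge0.
have Bdiag u : 0 < B u u.
  by rewrite -qf_delta; apply: lt_le_trans B_gt0 (Bunit _ (sqnorm_delta R u)).
have c0 : - (k - 1)^-1 != 0 by rewrite oppr_eq0 invr_eq0 subr_eq0 gt_eqF.
have [P [z [sP zP pP z1]]] := normalized_certificate u0 c0 sB suppB pB Bdiag BN.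
rewrite invrN invrK opprK => Pz.
have [v v1 Pv] := qf_max_approx P u0 eps0.
exists P, (qf_max P), v; split=> //; last exact: ltW.
  by split=> //; exact: psd_max_sub.
by rewrite -Pz; exact: qf_le_max.
Qed.

End DualCertificate.

Section KroneckerForm.
Variables (R : realType) (T1 T2 : finType) (d : nat) (Y : T1 -> T2 -> 'rV[R]_d).
Implicit Types (C : T1 -> T1 -> T2 -> T2 -> R).

Definition kron_form C :=
  \sum_g \sum_g' \sum_h \sum_h' C g g' h h' * dotv (Y g h) (Y g' h').

Lemma kron_formD C1 C2 :
  kron_form (fun g g' h h' => C1 g g' h h' + C2 g g' h h') = kron_form C1 + kron_form C2.
Proof.
rewrite /kron_form -big_split; apply: eq_bigr => g _; rewrite -big_split.
apply: eq_bigr => g' _; rewrite -big_split; apply: eq_bigr => h _.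
by rewrite -big_split; apply: eq_bigr => h' _ /=; ring.
Qed.

Lemma kron_form_ge0 (S : T1 -> T1 -> R) (Q : T2 -> T2 -> R) : symm S -> psd S -> psd Q ->
  0 <= kron_form (fun g g' h h' => S g g' * Q h h').
Proof.
move=> sS pS pQ.
suff -> : kron_form (fun g g' h h' => S g g' * Q h h') =
    frob S (fun g g' => \sum_h \sum_h' Q h h' * dotv (Y g h) (Y g' h')).
  exact: frob_psd_ge0 sS pS (psd_dotv_form Y pQ).
apply: eq_bigr => g _; apply: eq_bigr => g' _; rewrite big_distrr; apply: eq_bigr => h _.
by rewrite big_distrr; apply: eq_bigr => h' _ /=; ring.
Qed.

Lemma kron_formZ a C : kron_form (fun g g' h h' => a * C g g' h h') = a * kron_form C.
Proof.
rewrite /kron_form big_distrr; apply: eq_bigr => g _; rewrite big_distrr.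
apply: eq_bigr => g' _; rewrite big_distrr; apply: eq_bigr => h _.
by rewrite big_distrr; apply: eq_bigr => h' _ /=; ring.
Qed.

End KroneckerForm.

(* Entrywise form of [max p q * (I ⊗ I) + P ⊗ Q = a (p I - P) ⊗ (q I - Q) +
   b (p I - P) ⊗ (I + Q) + g (I + P) ⊗ (q I - Q) + d (I + P) ⊗ (I + Q)]. *)
Lemma kron_decomposition (R : realType) (p q : R) : 0 <= p -> 0 <= q ->
  exists a b g d : R, [/\ 0 <= a, 0 <= b, 0 <= g, 0 <= d &
    forall x P y Q, Num.max p q * (x * y) + P * Q =
      a * ((p * x - P) * (q * y - Q)) + b * ((p * x - P) * (y + Q)) +
      g * ((x + P) * (q * y - Q)) + d * ((x + P) * (y + Q))].
Proof.
move=> p0 q0; set m := Num.max p q.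
have mp : p <= m by rewrite le_max lexx.
have mq : q <= m by rewrite le_max lexx orbT.
have D0 : 0 < (p + 1) * (q + 1) by rewrite mulr_gt0 // ltr_wpDl.
exists ((m + 1) / ((p + 1) * (q + 1))), ((m - q) / ((p + 1) * (q + 1))),
  ((m - p) / ((p + 1) * (q + 1))), (1 - (1 + p + q - m) / ((p + 1) * (q + 1))).
split; rewrite ?divr_ge0 ?subr_ge0 ?(ltW D0) //; try lra.
by rewrite ler_pdivrMr // mul1r; nra.
have q1 : q + 1 != 0 by rewrite gt_eqF // ltr_wpDl.
have p1 : p + 1 != 0 by rewrite gt_eqF // ltr_wpDl.
by move=> x P y Q; field; rewrite q1 p1.
Qed.

Section ProductDuality.
Variables (R : realType) (T1 T2 : finType) (e1 : rel T1) (e2 : rel T2).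
Variables (d : nat) (phi : T1 * T2 -> 'rV[R]_d) (c : R) (v : T1 -> R) (w : T2 -> R).
Hypotheses (phi1 : forall x, dotv (phi x) (phi x) = 1)
  (phie : forall x y, cat_prod e1 e2 x y -> dotv (phi x) (phi y) = c).
Hypotheses (v1 : sqnorm v = 1) (w1 : sqnorm w = 1).

Let Y g h := (v g * w h) *: phi (g, h).

Lemma kron_form_id :
  kron_form Y (fun g g' h h' => (g == g')%:R * (h == h')%:R) = 1.
Proof.
transitivity (\sum_g \sum_g' (g' == g)%:R *
    \sum_h \sum_h' (h' == h)%:R * dotv (Y g h) (Y g' h')).
  apply: eq_bigr => g _; apply: eq_bigr => g' _; rewrite big_distrr.
  apply: eq_bigr => h _; rewrite !big_distrr; apply: eq_bigr => h' _ /=.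
  by rewrite (eq_sym g') (eq_sym h') mulrA.
under eq_bigr do rewrite sum_delta; under eq_bigr do under eq_bigr do rewrite sum_delta.
transitivity (sqnorm v * sqnorm w); last by rewrite v1 w1 mulr1.
rewrite /sqnorm big_distrl; apply: eq_bigr => g _; rewrite big_distrr.
by apply: eq_bigr => h _; rewrite dotvZ phi1 /=; ring.
Qed.

Lemma kron_form_dual P Q :
  (forall g g', ~~ e1 g g' -> P g g' = 0) -> (forall h h', ~~ e2 h h' -> Q h h' = 0) ->
  kron_form Y (fun g g' h h' => P g g' * Q h h') = c * qf P v * qf Q w.
Proof.
move=> P0 Q0; rewrite /qf /bil -mulrA big_distrl big_distrr; apply: eq_bigr => g _.
rewrite big_distrl big_distrr; apply: eq_bigr => g' _.
rewrite !big_distrr; apply: eq_bigr => h _; rewrite !big_distrr; apply: eq_bigr => h' _ /=.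
rewrite dotvZ; case E1 : (e1 g g'); last by rewrite P0 ?E1 //; ring.
case E2 : (e2 h h'); last by rewrite Q0 ?E2 //; ring.
by rewrite phie ?/cat_prod /= ?E1 ?E2 //; ring.
Qed.

Lemma product_weak_duality P Q p q : dual_feasible e1 P p -> dual_feasible e2 Q q ->
  0 <= p -> 0 <= q -> 0 <= Num.max p q + c * qf P v * qf Q w.
Proof.
case=> sP P0 pIP pPI [sQ Q0 pIQ pQI] p0 q0.
have [a [b [g [d' [a0 b0 g0 d0 dec]]]]] := kron_decomposition p0 q0.
have sIP : symm (fun u u' => (u == u')%:R + P u u') by move=> u u'; rewrite eq_sym sP.
have sPI : symm (fun u u' => p * (u == u')%:R - P u u') by move=> u u'; rewrite eq_sym sP.
rewrite -(kron_form_dual P0 Q0) -[Num.max p q]mulr1 -kron_form_id -kron_formZ -kron_formD.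
pose A1 u u' := p * (u == u')%:R - P u u'; pose A2 u u' := (u == u')%:R + P u u'.
pose B1 h h' := q * (h == h')%:R - Q h h'; pose B2 h h' := (h == h')%:R + Q h h'.
have -> : (fun u u' h h' => Num.max p q * ((u == u')%:R * (h == h')%:R) + P u u' * Q h h') =
    (fun u u' h h' => a * A1 u u' * B1 h h' + (b * A1 u u' * B2 h h' +
      (g * A2 u u' * B1 h h' + d' * A2 u u' * B2 h h'))).
  by do 4!apply/funext => ?; rewrite dec /A1 /A2 /B1 /B2; ring.
have kron_ge0 (S : T1 -> T1 -> R) (Q' : T2 -> T2 -> R) x : symm S -> psd S -> psd Q' ->
    0 <= x -> 0 <= kron_form Y (fun u u' h h' => x * S u u' * Q' h h').
  by move=> sS pS pQ' x0; apply: kron_form_ge0 (symm_scale x sS) (psd_scale x0 pS) pQ'.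
by rewrite !kron_formD !addr_ge0 // kron_ge0.
Qed.

End ProductDuality.

Lemma sqr_sum_le (R : realType) (T : finType) (x : T -> R) :
  (\sum_u x u) ^+ 2 <= #|T|%:R * sqnorm x.
Proof.
have : 0 <= \sum_u \sum_w (x u - x w) ^+ 2.
  by apply: sumr_ge0 => u _; apply: sumr_ge0 => w _; exact: sqr_ge0.
have -> : \sum_u \sum_w (x u - x w) ^+ 2 = 2 * (#|T|%:R * sqnorm x) - 2 * (\sum_u x u) ^+ 2.
  transitivity (\sum_u \sum_w (x u ^+ 2 + x w ^+ 2 + (-2) * (x u * x w))).
    by apply: eq_bigr => u _; apply: eq_bigr => w _; ring.
  have split2 (F G : T -> T -> R) : \sum_u \sum_w (F u w + G u w) =
      \sum_u \sum_w F u w + \sum_u \sum_w G u w.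
    by rewrite -big_split /=; apply: eq_bigr => u _; rewrite big_split.
  rewrite !split2.
  have -> : \sum_u \sum_(w : T) x u ^+ 2 = #|T|%:R * sqnorm x.
    under eq_bigr do rewrite sumr_const -mulr_natr.
    by rewrite -big_distrl /= mulrC.
  have -> : \sum_(u : T) \sum_w x w ^+ 2 = #|T|%:R * sqnorm x.
    by rewrite sumr_const -[_ *+ _]mulr_natr mulrC.
  have -> : \sum_u \sum_w (-2) * (x u * x w) = (-2) * (\sum_u x u) ^+ 2.
    rewrite expr2 big_distrl /= big_distrr /=; apply: eq_bigr => u _.
    by rewrite big_distrr /= big_distrr /=; apply: eq_bigr => w _; ring.
  ring.
lra.
Qed.

Section StrictVectorChromaticNumber.
Variable R : realType.

Definition svc_set (T : finType) (e : rel T) : set R :=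
  [set k | 1 < k /\ exists d (phi : T -> 'rV[R]_d), strict_vector_coloring e k phi]%classic.

Lemma svchiE (T : finType) (e : rel T) : svchi R e = inf (svc_set e).
Proof. by []. Qed.

Lemma svc_set_lb (T : finType) (e : rel T) : has_lbound (svc_set e).
Proof. by exists 1 => k [k1 _]; exact: ltW. Qed.

Lemma svchi_le (T : finType) (e : rel T) k d (phi : T -> 'rV[R]_d) :
  1 < k -> strict_vector_coloring e k phi -> svchi R e <= k.
Proof. by move=> k1 phik; apply: ge_inf; [exact: svc_set_lb | split=> //; exists d, phi]. Qed.

Lemma not_realizable_lt_svchi (T : finType) (e : rel T) k :
  1 < k -> k < svchi R e -> ~ realizable e (- (k - 1)^-1).
Proof. by move=> k1 kS [d [phi phik]]; move: kS; rewrite ltNge (svchi_le k1 phik). Qed.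

(* Witness: [|T|] unit vectors with pairwise inner products [-1 / (|T| + 1)]. *)
Lemma svc_set_nonempty (T : finType) (e : rel T) : irreflexive e ->
  (svc_set e !=set0)%classic.
Proof.
move=> eirr; pose m : R := #|T|%:R; have m0 : 0 <= m by rewrite ler0n.
pose a := (m + 1)^-1.
have a0 : 0 < a by rewrite invr_gt0; lra.
have am : a * m <= 1 by rewrite ler_pdivrMl ?mulr1; lra.
pose M (u w : T) : R := (1 + a) * (u == w)%:R - a * 1.
have sM : symm M by move=> u w; rewrite /M eq_sym.
have pM : psd M.
  move=> x; have -> : qf M x = (1 + a) * sqnorm x - a * (\sum_u x u) ^+ 2.
    rewrite qf_id_sub (qf_scale (fun _ _ => 1)); congr (_ - _ * _).
    rewrite /qf /bil expr2 big_distrl /=; apply: eq_bigr => u _.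
    by rewrite big_distrr /=; apply: eq_bigr => w _; ring.
  have := sqr_sum_le x; rewrite -/m => cs; have := sqnorm_ge0 x.
  have : a * (\sum_u x u) ^+ 2 <= a * (m * sqnorm x) by rewrite ler_pM2l.
  nra.
have [phi Hphi] := psd_gram sM pM.
exists (m + 2); split; first lra.
exists #|T|, phi; split=> [u|u w euw]; rewrite -Hphi /M.
  by rewrite eqxx /=; ring.
have /negPf -> : u != w by apply: contraTneq euw => ->; rewrite eirr.
have -> : m + 2 - 1 = m + 1 by ring.
by rewrite /a /=; ring.
Qed.

End StrictVectorChromaticNumber.

Lemma near_max_product (R : realType) (l K p q a b : R) : 0 < l < K ->
  K <= p -> K <= q -> p - (K - l) / 3 <= a -> q - (K - l) / 3 <= b ->
  Num.max p q * l < a * b.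
Proof.
move=> /andP[l0 lK]; wlog pq : p q a b / p <= q.
  move=> W Kp Kq pa qb; case/orP: (le_total p q) => [pq|qp]; first exact: W.
  by rewrite maxC [a * b]mulrC; apply: W.
move=> Kp Kq; set eps := (K - l) / 3 => pa qb.
rewrite max_r //; have eps0 : 0 < eps by rewrite divr_gt0 ?subr_gt0.
have Kl : K = l + 3 * eps by rewrite /eps; field.
have a_ge : l + 2 * eps <= a by lra.
have : (l + 2 * eps) * (q - eps) <= a * b by apply: ler_pM; lra.
nra.
Qed.

Section ProductGraph.
Variables (R : realType) (T1 T2 : finType) (e1 : rel T1) (e2 : rel T2).

Lemma strict_vector_coloring_fst k d (phi : T1 -> 'rV[R]_d) :
  strict_vector_coloring e1 k phi -> strict_vector_coloring (cat_prod e1 e2) k (phi \o fst).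
Proof. by case=> phi1 phie; split=> [x|x y /andP[E _]]; [exact: phi1 | exact: phie]. Qed.

Lemma strict_vector_coloring_snd k d (phi : T2 -> 'rV[R]_d) :
  strict_vector_coloring e2 k phi -> strict_vector_coloring (cat_prod e1 e2) k (phi \o snd).
Proof. by case=> phi1 phie; split=> [x|x y /andP[_ E]]; [exact: phi1 | exact: phie]. Qed.

Lemma svchi_cat_prod_le_fst : irreflexive e1 -> svchi R (cat_prod e1 e2) <= svchi R e1.
Proof.
move=> eirr; rewrite [X in _ <= X]svchiE.
apply: (lb_le_inf (svc_set_nonempty R eirr)) => k [k1 [d [phi phik]]].
exact: svchi_le k1 (strict_vector_coloring_fst phik).
Qed.

Lemma svchi_cat_prod_le_snd : irreflexive e2 -> svchi R (cat_prod e1 e2) <= svchi R e2.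
Proof.
move=> eirr; rewrite [X in _ <= X]svchiE.
apply: (lb_le_inf (svc_set_nonempty R eirr)) => k [k1 [d [phi phik]]].
exact: svchi_le k1 (strict_vector_coloring_snd phik).
Qed.

Lemma min_svchi_le k d (phi : T1 * T2 -> 'rV[R]_d) :
  simple_graph e1 -> simple_graph e2 -> 1 < k ->
  strict_vector_coloring (cat_prod e1 e2) k phi -> Num.min (svchi R e1) (svchi R e2) <= k.
Proof.
move=> [esym1 eirr1] [esym2 eirr2] k1 [phi1 phie]; rewrite leNgt; apply/negP => k_lt.
move: (k_lt); rewrite lt_min => /andP[k_lt1 k_lt2].
pose k' := (k + Num.min (svchi R e1) (svchi R e2)) / 2.
have min_le1 : Num.min (svchi R e1) (svchi R e2) <= svchi R e1 by rewrite ge_min lexx.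
have min_le2 : Num.min (svchi R e1) (svchi R e2) <= svchi R e2 by rewrite ge_min lexx orbT.
have k'1 : 1 < k' by rewrite /k'; lra.
have k'_lt1 : k' < svchi R e1 by rewrite /k'; lra.
have k'_lt2 : k' < svchi R e2 by rewrite /k'; lra.
have eps0 : 0 < (k' - 1 - (k - 1)) / 3 by rewrite divr_gt0 // /k'; lra.
have [P [p [v [Pp kp v1 pv]]]] :=
  dual_certificate esym1 eirr1 k'1 eps0 (not_realizable_lt_svchi k'1 k'_lt1).
have [Q [q [w [Qq kq w1 qw]]]] :=
  dual_certificate esym2 eirr2 k'1 eps0 (not_realizable_lt_svchi k'1 k'_lt2).
have k0 : 0 < k - 1 by lra.
have kk : 0 < k - 1 < k' - 1 by rewrite k0 /k'; lra.
have := near_max_product kk kp kq pv qw.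
have p0 : 0 <= p by lra.
have q0 : 0 <= q by lra.
have := mulr_ge0 (product_weak_duality phi1 phie v1 w1 Pp Qq p0 q0) (ltW k0).
have -> : (Num.max p q + - (k - 1)^-1 * qf P v * qf Q w) * (k - 1) =
  Num.max p q * (k - 1) - qf P v * qf Q w by field; rewrite gt_eqF.
lra.
Qed.

End ProductGraph.

Theorem theorem4p6 (R : realType) (T1 T2 : finType) (e1 : rel T1) (e2 : rel T2)
  (G1 : simple_graph e1) (G2 : simple_graph e2) :
  svchi R (cat_prod e1 e2) = Num.min (svchi R e1) (svchi R e2).
Proof.
have [_ irr1] := G1; have [_ irr2] := G2.
have irr_prod : irreflexive (cat_prod e1 e2) by move=> x; rewrite /cat_prod irr1.
apply/eqP; rewrite eq_le le_min svchi_cat_prod_le_fst // svchi_cat_prod_le_snd //=.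
rewrite [X in _ <= X]svchiE; apply: (lb_le_inf (svc_set_nonempty R irr_prod)).
by move=> k [k1 [d [phi phik]]]; exact: min_svchi_le G1 G2 k1 phik.
Qed.
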